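(* The composition map $(c,d)\mapsto c\circ d$, restricted to $\mathtt{CA}\times\mathtt{SUR}$, is continuous from $(\mathtt{CA},\delta)\times(\mathtt{SUR},\delta)$ to $(\mathtt{CA},\delta)$.
   Context: $\Sigma$ is a finite alphabet with $|\Sigma|\ge2$. For $r\in\mathbb{N}$, $N(r)=[-r,r]\subseteq\mathbb{Z}$. A cellular automaton (CA) $c:\Sigma^\mathbb{Z}\to\Sigma^\mathbb{Z}$ is a map given by a local function $F:\Sigma^{N(r)}\to\Sigma$ via $c(x)_i=F(x_{[i-r,i+r]})$ for some $r\in\mathbb{N}$ (any such $r$ is a radius of $c$; the minimal one is $r(c)$); equivalently, a continuous shift-commuting map. $\mathtt{CA}$ is the set of all CA on $\Sigma^\mathbb{Z}$ and $\mathtt{SUR}$ the set of surjective ones. For $c,d\in\mathtt{CA}$ and a common radius $r$, the difference set is $D^c_d=\{w\in\Sigma^{N(r)}\mid c(x)_0\ne d(x)_0 \text{ for } x \text{ with } x_{[-r,r]}=w\}$ (i.e. the words on which the local rules of $c$ and $d$ give different central outputs), and the metric is $\delta(c,d)=|D^c_d|/|\Sigma|^{2r+1}$, which does not depend on the choice of $r$. $(\mathtt{CA},\delta)$ is called the uniform Bernoulli space. *)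

From HB Require Import structures.
From mathcomp Require Import all_boot all_order all_algebra.
From Stdlib Require Import ClassicalEpsilon.
Set Implicit Arguments. Unset Strict Implicit. Unset Printing Implicit Defensive.
Import Order.TTheory GRing.Theory Num.Theory.
Local Open Scope ring_scope.

Definition config (S : finType) := int -> S.

Definition window (S : finType) (r : nat) (x : config S) (i : int)
  : {ffun 'I_(r.*2).+1 -> S} :=
  [ffun k : 'I_(r.*2).+1 => x (i - r%:Z + (nat_of_ord k)%:Z)].

Definition is_radius (S : finType) (c : config S -> config S) (r : nat) : Prop :=
  exists F : {ffun 'I_(r.*2).+1 -> S} -> S,
    forall (x : config S) (i : int), c x i = F (window r x i).

Definition isCA (S : finType) (c : config S -> config S) : Prop :=
  exists r : nat, is_radius c r.

Definition isSurjective (S : finType) (c : config S -> config S) : Prop :=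
  forall y : config S, exists x : config S, c x = y.

(* some configuration x with x_[-r,r] = w (arbitrary outside) *)
Definition extend (S : finType) (r : nat) (w : {ffun 'I_(r.*2).+1 -> S})
  : config S :=
  fun j => if (- (r%:Z) <= j) && (j <= r%:Z)
           then w (inord (absz (j + r%:Z)))
           else w ord0.

Definition diffset (S : finType) (r : nat) (c d : config S -> config S)
  : {set {ffun 'I_(r.*2).+1 -> S}} :=
  [set w | c (extend w) 0 != d (extend w) 0].

Definition delta_r (S : finType) (r : nat) (c d : config S -> config S) : rat :=
  (#|diffset r c d|)%:R / ((#|S| ^ (r.*2).+1)%N)%:R.

(* a chosen radius of c (any radius, when c is a CA) *)
Definition some_radius (S : finType) (c : config S -> config S) : nat :=
  epsilon (inhabits 0%N) (fun r => is_radius c r).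

Definition delta (S : finType) (c d : config S -> config S) : rat :=
  delta_r (maxn (some_radius c) (some_radius d)) c d.

(* All differences between cellular automata are measured by densities: for a
   predicate P on configurations that only looks at the cells [a, a+n), its
   density is the proportion of words t of length n such that P holds on the
   configuration carrying t at position a.  This proportion does not change
   when the window is enlarged, and delta c d is the density of the predicate
   "c and d disagree at cell 0".

   The key fact is Hedlund's balance theorem: if d is surjective with radius r,
   every word of length m has exactly |S|^(2r) preimages of length m + 2r under
   the local rule of d.  Hence d preserves densities: P \o d has the same
   density as P.  Writing c d and c' d' for compositions, the triangle inequality
   delta (c d) (c' d') <= delta (c d) (c d') + delta (c d') (c' d') then gives
   - delta (c d) (c d') <= (2 r_c + 1) delta d d', since c d and c d' can only
     differ at 0 if d and d' differ somewhere in [-r_c, r_c];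
   - delta (c d') (c' d') = delta c c', by density preservation under d'.
   So eta = eps / (2 r_c + 2) works in the main theorem. *)
From HB Require Import structures.
From mathcomp Require Import all_boot all_order all_algebra.
From mathcomp Require Import zify ring.
From Stdlib Require Import ClassicalEpsilon FunctionalExtensionality.
Set Implicit Arguments. Unset Strict Implicit. Unset Printing Implicit Defensive.
Import Order.TTheory GRing.Theory Num.Theory.

Lemma sum_tuple_cat (T : finType) n m (F : seq T -> nat) :
  \sum_(t : (n + m).-tuple T) F t =
  \sum_(t1 : n.-tuple T) \sum_(t2 : m.-tuple T) F (t1 ++ t2).
Proof.
rewrite pair_bigA /=.
have take_ok (t : (n + m).-tuple T) : size (take n t) == n.
  by rewrite size_takel // size_tuple leq_addr.
have drop_ok (t : (n + m).-tuple T) : size (drop n t) == m.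
  by rewrite size_drop size_tuple addKn.
rewrite (reindex (fun p : n.-tuple T * m.-tuple T => cat_tuple p.1 p.2)) //=.
exists (fun t => (Tuple (take_ok t), Tuple (drop_ok t))) => [[t1 t2] _|t _].
- congr pair; apply: val_inj => /=.
  + by rewrite take_size_cat // size_tuple.
  + by rewrite drop_size_cat // size_tuple.
- by apply: val_inj => /=; rewrite cat_take_drop.
Qed.

Lemma sum_tuple_cons (T : finType) k (F : seq T -> nat) :
  \sum_(t : k.+1.-tuple T) F t = \sum_(y : T) \sum_(t : k.-tuple T) F (y :: t).
Proof.
rewrite pair_bigA /=.
rewrite (reindex (fun p : T * k.-tuple T => cons_tuple p.1 p.2)) //=.
exists (fun t : k.+1.-tuple T => (thead t, behead_tuple t)) => [[y t] _|t _].
- by congr pair; apply: val_inj.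
- by apply: val_inj; rewrite /= [in RHS](tuple_eta t).
Qed.

Lemma sum_tuple_const (T : finType) k (c : nat) :
  \sum_(t : k.-tuple T) c = (#|T| ^ k * c)%N.
Proof. by rewrite sum_nat_const card_tuple. Qed.

Lemma sum_tuple_indicator (T : finType) m (w : seq T) (g : seq T -> nat) :
  size w = m -> \sum_(u : m.-tuple T) (w == val u) * g (val u) = g w.
Proof.
move=> hw; have hw' : size w == m by apply/eqP.
rewrite (bigD1 (Tuple hw')) //= eqxx mul1n big1 ?addn0 // => u hu.
case: eqP => // e; exfalso; move/eqP: hu; apply; apply: val_inj => /=; by rewrite e.
Qed.

Lemma sum_tuple_indicator_le1 (T : finType) m (w : seq T) :
  \sum_(u : m.-tuple T) (w == val u) <= 1.
Proof.
case: (eqVneq (size w) m) => hw.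
  have E := sum_tuple_indicator (fun _ => 1%N) hw.
  by rewrite (eq_bigr _ (fun u _ => muln1 _)) in E; rewrite E.
rewrite big1 // => u _; case: eqP => // e; move: hw; by rewrite e size_tuple eqxx.
Qed.

(* Densities of predicates depending on finitely many cells. *)

Section Density.
Variables (S : finType) (x0 : S).

Definition pad (a : int) (s : seq S) : config S :=
  fun j => if (a <= j)%R then nth x0 s (absz (j - a)) else x0.

Definition depends_on (a : int) (n : nat) (P : config S -> bool) : Prop :=
  forall x y : config S,
    (forall j : int, (a <= j)%R -> (j < a + Posz n)%R -> x j = y j) -> P x = P y.

Definition count_pad (a : int) (n : nat) (P : config S -> bool) : nat :=
  \sum_(t : n.-tuple S) P (pad a t).

Definition density (a : int) (n : nat) (P : config S -> bool) : rat :=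
  ((count_pad a n P)%:R / (#|S| ^ n)%:R)%R.

Lemma depends_on_widen a n a' n' (P : config S -> bool) :
  depends_on a n P -> (a' <= a)%R -> (a + Posz n <= a' + Posz n')%R ->
  depends_on a' n' P.
Proof. move=> dP h1 h2 x y hxy; apply: dP => j j1 j2; apply: hxy; lia. Qed.

Lemma count_pad_right a n k P :
  depends_on a n P -> count_pad a (n + k) P = (count_pad a n P * #|S| ^ k)%N.
Proof.
move=> dP; rewrite /count_pad (sum_tuple_cat _ _ (fun s => nat_of_bool (P (pad a s)))).
rewrite big_distrl /=; apply: eq_bigr => t1 _.
rewrite (eq_bigr (fun _ => nat_of_bool (P (pad a t1)))); last first.
  move=> t2 _; congr nat_of_bool; apply: dP => j h1 h2.
  rewrite /pad h1 nth_cat size_tuple; case: ifP => //; lia.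
by rewrite sum_tuple_const mulnC.
Qed.

Lemma count_pad_left a n k P :
  depends_on a n P ->
  count_pad (a - Posz k)%R (k + n) P = (#|S| ^ k * count_pad a n P)%N.
Proof.
move=> dP.
rewrite /count_pad (sum_tuple_cat _ _ (fun s => nat_of_bool (P (pad (a - Posz k)%R s)))).
rewrite (eq_bigr (fun _ => \sum_(t2 : n.-tuple S) P (pad a t2))); last first.
  move=> t1 _; apply: eq_bigr => t2 _; congr nat_of_bool; apply: dP => j h1 h2.
  have h3 : (a - Posz k <= j)%R by lia.
  rewrite /pad h1 h3 nth_cat size_tuple; case: ifP; first lia.
  by move=> _; congr nth; lia.
by rewrite sum_tuple_const.
Qed.

Lemma card_pow_neq0 m : ((#|S| ^ m)%:R : rat) != 0%R.
Proof.
by rewrite pnatr_eq0 -lt0n expn_gt0; apply/orP; left; apply/card_gt0P; exists x0.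
Qed.

Lemma density_widen a n a' n' P :
  depends_on a n P -> (a' <= a)%R -> (a + Posz n <= a' + Posz n')%R ->
  density a' n' P = density a n P.
Proof.
move=> dP h1 h2.
set k := absz (a - a')%R; set k' := (n' - n - k)%N.
have -> : a' = (a - Posz k)%R by rewrite /k; lia.
have -> : n' = (k + (n + k'))%N by rewrite /k' /k; lia.
have dP' : depends_on a (n + k') P by apply: depends_on_widen dP _ _; lia.
rewrite /density count_pad_left // count_pad_right // !expnD !natrM.
by field; rewrite !card_pow_neq0.
Qed.

Lemma density_le_sum a n (P : config S -> bool) K (Q : 'I_K -> config S -> bool) :
  (forall x, (P x <= \sum_(i < K) Q i x)%N) ->
  (density a n P <= \sum_(i < K) density a n (Q i))%R.
Proof.
move=> hPQ.
have h : (count_pad a n P <= \sum_(i < K) count_pad a n (Q i))%N.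
  by rewrite /count_pad exchange_big /=; apply: leq_sum => t _; exact: hPQ.
rewrite /density -mulr_suml -natr_sum; apply: ler_wpM2r; last by rewrite ler_nat.
by rewrite invr_ge0 ler0n.
Qed.

Lemma density_le_add a n (P Q1 Q2 : config S -> bool) :
  (forall x, (P x <= Q1 x + Q2 x)%N) ->
  (density a n P <= density a n Q1 + density a n Q2)%R.
Proof.
move=> hPQ.
have h : (count_pad a n P <= count_pad a n Q1 + count_pad a n Q2)%N.
  by rewrite /count_pad -big_split /=; apply: leq_sum => t _; exact: hPQ.
rewrite /density -mulrDl -natrD; apply: ler_wpM2r; last by rewrite ler_nat.
by rewrite invr_ge0 ler0n.
Qed.

Definition shift (k : int) (x : config S) : config S := fun j => x (j + k)%R.

Lemma density_shift a n k (P : config S -> bool) :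
  density a n (fun x => P (shift k x)) = density (a - k)%R n P.
Proof.
rewrite /density /count_pad; congr (_%:R / _)%R; apply: eq_bigr => t _.
congr nat_of_bool; congr P; apply: functional_extensionality => j.
rewrite /shift /pad.
have -> : ((a <= j + k) = (a - k <= j))%R by apply/idP/idP; lia.
by case: ifP => // _; congr nth; lia.
Qed.

End Density.


Section Radius.
Variable S : finType.
Implicit Types (c d : config S -> config S) (x y : config S).

Lemma some_radius_spec c : isCA c -> is_radius c (some_radius c).
Proof. by move=> h; rewrite /some_radius; exact: epsilon_spec. Qed.

Lemma radius_window c r :
  is_radius c r -> forall x y i j, window r x i = window r y j -> c x i = c y j.
Proof. by case=> F hF x y i j e; rewrite !hF e. Qed.

(* extend w is a configuration whose window at 0 is w; this lets a map that
   only depends on windows be written with a local rule. *)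
Lemma window_extend r (w : {ffun 'I_(r.*2).+1 -> S}) : window r (extend w) 0 = w.
Proof.
apply/ffunP => k; rewrite ffunE /extend.
have hk := ltn_ord k.
case: ifP => [_|]; last by lia.
by congr (w _); apply: val_inj => /=; rewrite inordK; lia.
Qed.

Lemma radius_of_window c r :
  (forall x y i j, window r x i = window r y j -> c x i = c y j) -> is_radius c r.
Proof.
move=> h; exists (fun w => c (extend w) 0) => x i.
by apply: h; rewrite window_extend.
Qed.

Lemma radius_local c r R (i : int) x y :
  is_radius c r -> (r <= R)%N ->
  (forall j : int, (i - Posz R <= j)%R -> (j < i - Posz R + Posz (R.*2).+1)%R ->
     x j = y j) ->
  c x i = c y i.
Proof.
move=> hr hR hxy; apply: (radius_window hr); apply/ffunP => k; rewrite !ffunE.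
by have := ltn_ord k => hk; apply: hxy; lia.
Qed.

Lemma window_entry R x y i j (k : nat) :
  window R x i = window R y j -> (k < (R.*2).+1)%N ->
  x (i - Posz R + Posz k)%R = y (j - Posz R + Posz k)%R.
Proof.
move=> e hk.
have := congr1 (fun w : {ffun 'I_(R.*2).+1 -> S} => w (inord k)) e.
by rewrite /= !ffunE inordK.
Qed.

Lemma radius_comp c d rc rd :
  is_radius c rc -> is_radius d rd -> is_radius (fun x => c (d x)) (rc + rd).
Proof.
move=> hc hd; apply: radius_of_window => x y i j e.
apply: (radius_window hc); apply/ffunP => k; rewrite !ffunE.
apply: (radius_window hd); apply/ffunP => l; rewrite !ffunE.
have hk := ltn_ord k; have hl := ltn_ord l.
have -> : (i - Posz rc + Posz k - Posz rd + Posz l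
           = i - Posz (rc + rd) + Posz (k + l))%R by lia.
have -> : (j - Posz rc + Posz k - Posz rd + Posz l
           = j - Posz (rc + rd) + Posz (k + l))%R by lia.
by apply: window_entry e _; lia.
Qed.

Lemma isCA_comp c d : isCA c -> isCA d -> isCA (fun x => c (d x)).
Proof. by move=> [rc hc] [rd hd]; exists (rc + rd); exact: radius_comp. Qed.

Lemma radius_shift d r k x : is_radius d r -> d (shift k x) 0%R = d x k.
Proof.
move=> hd; apply: (radius_window hd); apply/ffunP => l; rewrite !ffunE /shift.
by congr x; lia.
Qed.

Lemma depends_on_comp d r a n (P : config S -> bool) :
  is_radius d r -> depends_on a n P ->
  depends_on (a - Posz r)%R (n + r.*2) (fun x => P (d x)).
Proof.
move=> hd dP x y hxy; apply: dP => j j1 j2.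
apply: (radius_window hd); apply/ffunP => l; rewrite !ffunE.
by have := ltn_ord l => hl; apply: hxy; lia.
Qed.

Definition differ c d : config S -> bool := fun x => c x 0%R != d x 0%R.

Lemma depends_on_differ c d r r' R :
  is_radius c r -> is_radius d r' -> (r <= R)%N -> (r' <= R)%N ->
  depends_on (- Posz R)%R (R.*2).+1 (differ c d).
Proof.
move=> hc hd h1 h2 x y hxy; rewrite /differ.
have loc j : (0 - Posz R <= j)%R -> (j < 0 - Posz R + Posz (R.*2).+1)%R -> x j = y j.
  by move=> j1 j2; apply: hxy; lia.
by rewrite (radius_local hc h1 loc) (radius_local hd h2 loc).
Qed.

Lemma delta_r_density (x0 : S) c d R :
  depends_on (- Posz R)%R (R.*2).+1 (differ c d) ->
  delta_r R c d = density x0 (- Posz R)%R (R.*2).+1 (differ c d).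
Proof.
move=> dP; rewrite /delta_r /density; congr (_%:R / _)%R.
rewrite /diffset cardsE -sum1_card big_mkcond /count_pad /=.
rewrite (reindex (@finfun_of_tuple S (R.*2).+1)) /=; last first.
  by exists (@tuple_of_finfun S (R.*2).+1) => t _;
   rewrite ?finfun_of_tupleK ?tuple_of_finfunK.
apply: eq_bigr => t _ /=; rewrite unfold_in.
have -> : (c (extend (finfun_of_tuple t)) 0%R != d (extend (finfun_of_tuple t)) 0%R)
          = differ c d (pad x0 (- Posz R)%R t).
  apply: dP => j j1 j2; rewrite /extend /pad.
  have -> : ((- Posz R <= j)%R && (j <= Posz R)%R) by lia.
  rewrite j1 ffunE (tnth_nth x0) /= inordK; last by lia.
  by congr nth; lia.
by case: (differ _ _ _).
Qed.

Lemma delta_density (x0 : S) c d a n :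
  isCA c -> isCA d ->
  (a <= - Posz (maxn (some_radius c) (some_radius d)))%R ->
  (Posz (maxn (some_radius c) (some_radius d)) + 1 <= a + Posz n)%R ->
  delta c d = density x0 a n (differ c d).
Proof.
move=> hc hd h1 h2.
have dP := depends_on_differ (some_radius_spec hc) (some_radius_spec hd)
  (leq_maxl _ _) (leq_maxr _ _).
by rewrite /delta (delta_r_density x0 dP); symmetry; apply: density_widen => //; lia.
Qed.

End Radius.


(* An elementary counting fact used to close the balance argument:
   if q^k <= p^(k+1) for all k, then q <= p.  Indeed, were q >= p + 1, the
   Bernoulli inequality p^k (p + k) <= (p + 1)^k p fails for k = p^2 + 1. *)
Lemma bernoulli_nat p k : (p ^ k * (p + k) <= (p + 1) ^ k * p)%N.
Proof.
elim: k => [|k IH]; first by rewrite !expn0 addn0.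
rewrite !expnS; apply: (@leq_trans ((p + 1) * (p ^ k * (p + k)))); last first.
  by rewrite -mulnA leq_mul2l IH orbT.
nia.
Qed.

Lemma leq_of_pow_bound p q : (forall k, q ^ k <= p ^ k.+1) -> q <= p.
Proof.
move=> h; rewrite leqNgt; apply/negP => hpq.
case: (posnP p) => [p0|pp]; first by have := h 0; rewrite p0.
set k := (p * p + 1)%N.
have h1 : ((p + 1) ^ k <= p ^ k.+1)%N.
  by apply: leq_trans (h k); rewrite leq_exp2r ?/k ?addn1 //; lia.
have h3 : (p ^ k * (p + k) <= p ^ k * (p * p))%N.
  apply: (leq_trans (bernoulli_nat p k)); rewrite mulnC.
  by apply: leq_trans (leq_mul (leqnn p) h1) _; rewrite expnS; nia.
by rewrite leq_pmul2l ?expn_gt0 ?pp // /k in h3; lia.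
Qed.

Section LocalImage.
Variables (S : finType) (x0 : S) (r : nat) (G : {ffun 'I_(r.*2).+1 -> S} -> S).

Definition block (s : seq S) (i : nat) : {ffun 'I_(r.*2).+1 -> S} :=
  [ffun l : 'I_(r.*2).+1 => nth x0 s (i + l)].

Definition local_image (s : seq S) : seq S :=
  mkseq (fun i => G (block s i)) (size s - r.*2).

Lemma size_local_image s : size (local_image s) = (size s - r.*2)%N.
Proof. by rewrite size_mkseq. Qed.

Lemma nth_local_image s i :
  (i < size s - r.*2)%N -> nth x0 (local_image s) i = G (block s i).
Proof. by move=> h; rewrite nth_mkseq. Qed.

Lemma take_local_image m (s1 s2 : seq S) :
  size s1 = (m + r.*2)%N -> take m (local_image (s1 ++ s2)) = local_image s1.
Proof.
move=> h1.
have e : size (take m (local_image (s1 ++ s2))) = m.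
  by rewrite size_takel // size_local_image size_cat h1; lia.
apply: (@eq_from_nth _ x0); first by rewrite e size_local_image h1; lia.
move=> i; rewrite e => him.
rewrite nth_take // !nth_local_image ?size_cat ?h1; try lia.
congr G; apply/ffunP => l; rewrite !ffunE nth_cat h1.
by have := ltn_ord l; case: ifP => //; lia.
Qed.

Lemma drop_local_image (s1 s2 : seq S) :
  drop (size s1) (local_image (s1 ++ s2)) = local_image s2.
Proof.
apply: (@eq_from_nth _ x0); first by rewrite size_drop !size_local_image size_cat; lia.
move=> i; rewrite size_drop size_local_image size_cat => hi.
rewrite nth_drop !nth_local_image ?size_cat; try lia.
congr G; apply/ffunP => l; rewrite !ffunE nth_cat.
by case: ifP; first lia; move=> _; congr nth; lia.
Qed.

Definition preimages (N : nat) (v : seq S) : nat :=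
  \sum_(s : N.-tuple S) (local_image s == v).

(* Gluing: the preimages of u ++ y ++ v (|u| = m, |y| = 2r), summed over all
   middle words y, inject into pairs of preimages of u and of v. *)
Lemma preimages_glue m N (u v : seq S) :
  size u = m ->
  \sum_(y : (r.*2).-tuple S) preimages (m + r.*2 + N) (u ++ y ++ v)
   <= preimages (m + r.*2) u * preimages N v.
Proof.
move=> hu; rewrite /preimages exchange_big /=.
rewrite (sum_tuple_cat _ _
  (fun s => \sum_(y : (r.*2).-tuple S) (local_image s == u ++ y ++ v))).
rewrite big_distrl /=; apply: leq_sum => s1 _.
rewrite big_distrr /=; apply: leq_sum => s2 _.
have hs1 : size s1 = (m + r.*2)%N by rewrite size_tuple.
have [/andP[/eqP h1 /eqP h2]|h] :=
  boolP ((local_image s1 == u) && (local_image s2 == v)).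
  rewrite h1 h2 !eqxx muln1.
  apply: leq_trans
    (sum_tuple_indicator_le1 _ (take r.*2 (drop m (local_image (s1 ++ s2))))).
  apply: leq_sum => y _; case: eqP => // ->.
  by rewrite drop_size_cat // take_size_cat ?size_tuple ?eqxx.
rewrite big1 // => y _; case: eqP => // e; exfalso; move/negP: h; apply.
apply/andP; split; apply/eqP.
  by rewrite -(take_local_image s2 hs1) e take_size_cat.
rewrite -(drop_local_image s1 s2) e hs1 catA drop_size_cat //.
by rewrite size_cat size_tuple hu.
Qed.

Definition chain (u : seq S) (Y : seq (seq S)) : seq S :=
  foldr (fun y w => u ++ y ++ w) u Y.

Definition chain_length (n k : nat) : nat := iter k (addn n) n.

Lemma chain_lengthE n k : chain_length n k = (k * n + n)%N.
Proof.
elim: k => [|k IH] //=.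
by rewrite /chain_length /= -/(chain_length n k) IH mulSn; lia.
Qed.

Lemma size_chain m u (Y : seq (seq S)) :
  size u = m -> all (fun y => size y == r.*2) Y ->
  size (chain u Y) = (size Y * (m + r.*2) + m)%N.
Proof.
move=> hu; elim: Y => [|y Y IH] /=; first by rewrite hu.
by case/andP => /eqP hy hY; rewrite !size_cat IH // hu hy mulSn; lia.
Qed.

Definition chain_preimages (m : nat) (u : seq S) (k : nat) : nat :=
  \sum_(Y : k.-tuple ((r.*2).-tuple S))
    preimages (chain_length (m + r.*2) k) (chain u (map val Y)).

(* Iterated gluing bounds it above by (preimages u)^(k+1). *)
Lemma chain_preimages_upper m u k :
  size u = m -> chain_preimages m u k <= preimages (m + r.*2) u ^ k.+1.
Proof.
move=> hu; elim: k => [|k IH].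
  rewrite /chain_preimages (eq_bigr (fun _ => preimages (m + r.*2) u)).
    by rewrite sum_tuple_const expn0 mul1n expn1.
  by move=> Y _; rewrite tuple0.
rewrite /chain_preimages (sum_tuple_cons _ (fun Y : seq ((r.*2).-tuple S) =>
  preimages (chain_length (m + r.*2) k.+1) (chain u (map val Y)))).
rewrite exchange_big /=.
apply: (@leq_trans (\sum_(Y : k.-tuple ((r.*2).-tuple S))
   preimages (m + r.*2) u * preimages (chain_length (m + r.*2) k) (chain u (map val Y)))).
  by apply: leq_sum => Y _; exact: preimages_glue.
by rewrite -big_distrr /= expnS leq_mul2l IH orbT.
Qed.

Section Surjective.
Variable d : config S -> config S.
Hypothesis d_rule : forall x j, d x j = G (window r x j).
Hypothesis d_surj : isSurjective d.

Lemma rule_pad a s (i : nat) :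
  d (pad x0 a s) (a + Posz r + Posz i)%R = G (block s i).
Proof.
rewrite d_rule; congr G; apply/ffunP => l; rewrite !ffunE /pad.
by case: ifP; last lia; move=> _; congr nth; lia.
Qed.

Lemma local_image_surj (v : seq S) :
  exists s : seq S, size s = (size v + r.*2)%N /\ local_image s = v.
Proof.
have [x hx] := d_surj (pad x0 0%R v).
exists (mkseq (fun i => x (Posz i - Posz r)%R) (size v + r.*2)).
split; first by rewrite size_mkseq.
apply: (@eq_from_nth _ x0); first by rewrite size_local_image size_mkseq; lia.
move=> i; rewrite size_local_image size_mkseq => hi.
rewrite nth_local_image ?size_mkseq //.
have -> : nth x0 v i = pad x0 0%R v (Posz i) by rewrite /pad le0z_nat subr0.
rewrite -hx d_rule; congr G; apply/ffunP => l; rewrite !ffunE nth_mkseq.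
  by congr x; lia.
by have := ltn_ord l; lia.
Qed.

Lemma preimages_gt0 N v : N = (size v + r.*2)%N -> 0 < preimages N v.
Proof.
move=> hN; have [s [hs1 hs2]] := local_image_surj v.
have hs' : size s == N by rewrite hs1 hN.
by rewrite /preimages (bigD1 (Tuple hs')) //= hs2 eqxx.
Qed.

(* Since every chain has a preimage, there are at least |S|^(2rk) of them. *)
Lemma chain_preimages_lower m u k :
  size u = m -> (#|S| ^ r.*2) ^ k <= chain_preimages m u k.
Proof.
move=> hu.
have -> : ((#|S| ^ r.*2) ^ k = \sum_(Y : k.-tuple ((r.*2).-tuple S)) 1)%N.
  by rewrite sum_nat_const !card_tuple muln1.
apply: leq_sum => Y _; apply: preimages_gt0.
rewrite (size_chain (m := m)) // ?size_map ?size_tuple ?chain_lengthE; first lia.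
by apply/allP => y /mapP [z _ ->]; rewrite size_tuple.
Qed.

(* Lower and upper bounds on chains force at least |S|^(2r) preimages. *)
Lemma preimages_ge m (u : seq S) :
  size u = m -> #|S| ^ r.*2 <= preimages (m + r.*2) u.
Proof.
move=> hu; apply: leq_of_pow_bound => k.
exact: leq_trans (chain_preimages_lower k hu) (chain_preimages_upper k hu).
Qed.

(* Every word of length m + 2r is a preimage of exactly one word. *)
Lemma preimages_sum m :
  \sum_(u : m.-tuple S) preimages (m + r.*2) u = #|S| ^ (m + r.*2).
Proof.
rewrite /preimages exchange_big /= (eq_bigr (fun _ => 1%N)).
  by rewrite sum_tuple_const muln1.
move=> s _.
have E := sum_tuple_indicator (fun _ => 1%N) (size_local_image s).
rewrite (eq_bigr _ (fun u _ => muln1 _)) size_tuple addnK in E.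
by rewrite -[RHS]E; apply: eq_bigr => u _; rewrite eq_sym.
Qed.

(* Hedlund's balance theorem: each word of length m has exactly |S|^(2r)
   preimages, since each has at least that many and they add up to
   |S|^(m + 2r). *)
Lemma balance m (u : m.-tuple S) : preimages (m + r.*2) u = #|S| ^ r.*2.
Proof.
have ge (v : m.-tuple S) : #|S| ^ r.*2 <= preimages (m + r.*2) v.
  by apply: preimages_ge; rewrite size_tuple.
have := @sumnB _ (index_enum (m.-tuple S)) (fun _ => true) (fun _ => #|S| ^ r.*2)
  (preimages (m + r.*2)) (fun i _ => ge i).
rewrite preimages_sum sum_nat_const card_tuple expnD subnn => /eqP.
rewrite sum_nat_eq0 => /forallP /(_ u) /implyP /(_ isT).
by rewrite subn_eq0 => h; apply/eqP; rewrite eqn_leq h ge.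
Qed.

(* Counting form of measure preservation: the words of length m + 2r
   satisfying P \o d are the preimages of the words of length m satisfying P. *)
Lemma count_pad_comp a m (P : config S -> bool) :
  depends_on (a + Posz r)%R m P ->
  count_pad x0 a (m + r.*2) (fun x => P (d x))
  = (#|S| ^ r.*2 * count_pad x0 (a + Posz r)%R m P)%N.
Proof.
move=> dP; rewrite /count_pad.
transitivity (\sum_(s : (m + r.*2).-tuple S) \sum_(u : m.-tuple S)
   (local_image s == val u) * P (pad x0 (a + Posz r)%R u)).
  apply: eq_bigr => s _.
  have hsz : size (local_image s) = m by rewrite size_local_image size_tuple addnK.
  rewrite (sum_tuple_indicator (fun w => nat_of_bool (P (pad x0 (a + Posz r)%R w))) hsz).
  congr nat_of_bool; apply: dP => j j1 j2.
  set i := absz (j - (a + Posz r))%R.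
  have -> : j = (a + Posz r + Posz i)%R by rewrite /i; lia.
  have hi : (i < m)%N by rewrite /i; lia.
  rewrite rule_pad /pad.
  have -> : (a + Posz r <= a + Posz r + Posz i)%R by lia.
  have -> : absz (a + Posz r + Posz i - (a + Posz r))%R = i by lia.
  by rewrite nth_local_image // size_tuple addnK.
rewrite exchange_big /= big_distrr /=; apply: eq_bigr => u _.
by rewrite -big_distrl /= -/(preimages _ _) balance.
Qed.

End Surjective.
End LocalImage.

Lemma density_comp_surj (S : finType) (x0 : S) (d : config S -> config S) r a m
    (P : config S -> bool) :
  is_radius d r -> isSurjective d -> depends_on (a + Posz r)%R m P ->
  density x0 a (m + r.*2) (fun x => P (d x)) = density x0 (a + Posz r)%R m P.
Proof.
move=> [G hG] hsurj dP.
rewrite /density (count_pad_comp x0 hG hsurj dP) natrM expnD natrM.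
by field; rewrite !card_pow_neq0.
Qed.


(* The two estimates behind the continuity of composition. *)

Section Composition.
Variables (S : finType) (x0 : S).
Implicit Types (c d : config S -> config S) (x : config S).

Lemma differ_triangle (f g h : config S -> config S) x :
  (differ f h x <= differ f g x + differ g h x)%N.
Proof. by rewrite /differ; case: (f x 0%R =P g x 0%R) => [->|]; case: eqP. Qed.

Lemma differ_comp_left c d d' r x :
  is_radius c r -> isCA d -> isCA d' ->
  (differ (fun x => c (d x)) (fun x => c (d' x)) x <=
   \sum_(i < (r.*2).+1) differ d d' (shift (Posz i - Posz r)%R x))%N.
Proof.
move=> hc [rd hd] [rd' hd'].
have [none|some] := posnP (\sum_(i < (r.*2).+1)
    differ d d' (shift (Posz i - Posz r)%R x))%N; last exact: leq_trans (leq_b1 _) some.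
rewrite none; move/eqP: none; rewrite sum_nat_eq0 => /forallP agree.
rewrite leqn0 eqb0 negbK; apply/eqP.
apply: (radius_window hc); apply/ffunP => k; rewrite !ffunE.
have := agree k; rewrite /differ (radius_shift _ _ hd) (radius_shift _ _ hd').
have -> : (Posz k - Posz r = 0 - Posz r + Posz k)%R by lia.
by case: (d x _ =P d' x _).
Qed.

Lemma density_differ_comp_left c d d' M :
  isCA c -> isCA d -> isCA d' ->
  (some_radius c + maxn (some_radius d) (some_radius d') <= M)%N ->
  (density x0 (- Posz M)%R (M.*2).+1 (differ (fun x => c (d x)) (fun x => c (d' x)))
   <= ((some_radius c).*2.+1)%:R * delta d d')%R.
Proof.
move=> hc hd hd' hM; set r := some_radius c.
apply: le_trans (density_le_sum x0 (- Posz M)%R (M.*2).+1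
  (Q := fun (i : 'I_(r.*2).+1) x => differ d d' (shift (Posz i - Posz r)%R x))
  (fun x => differ_comp_left x (some_radius_spec hc) hd hd')) _.
rewrite (eq_bigr (fun _ => delta d d')); first by rewrite sumr_const card_ord mulr_natl.
move=> i _; have hi := ltn_ord i.
by rewrite density_shift -(delta_density x0 hd hd') //; lia.
Qed.

(* Since a surjective d preserves densities, delta (c d) (c' d) = delta c c'. *)
Lemma density_differ_comp_surj c c' d M :
  isCA c -> isCA c' -> isCA d -> isSurjective d ->
  (maxn (some_radius c) (some_radius c') + some_radius d <= M)%N ->
  density x0 (- Posz M)%R (M.*2).+1 (differ (fun x => c (d x)) (fun x => c' (d x)))
  = delta c c'.
Proof.
move=> hc hc' hd hsurj hM.
set R := maxn (some_radius c) (some_radius c'); set r := some_radius d.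
have hr : is_radius d r := some_radius_spec hd.
have dP := depends_on_differ (some_radius_spec hc) (some_radius_spec hc')
  (leq_maxl _ _) (leq_maxr _ _).
have dPd := depends_on_comp hr dP.
have shiftR : (- Posz R - Posz r + Posz r = - Posz R)%R by lia.
rewrite -shiftR in dP.
change (differ (fun x => c (d x)) (fun x => c' (d x)))
  with (fun x => differ c c' (d x)).
rewrite (density_widen x0 dPd); try lia.
rewrite (density_comp_surj x0 hr hsurj dP) shiftR.
by rewrite -(delta_density x0 hc hc') //; rewrite /R; lia.
Qed.

End Composition.

Local Open Scope ring_scope.

(* Composition is continuous at (c, d): with K = 2 r_c + 1, taking
   eta = eps / (K + 1) gives
   delta (c d) (c' d') <= K delta d d' + delta c c' < K eta + eta = eps. *)
Theorem mainTheorem4 (S : finType) (hS : (1 < #|S|)%N)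
  (c d : config S -> config S) (hc : isCA c) (hd : isCA d)
  (hdsur : isSurjective d) (eps : rat) (heps : 0 < eps) :
  exists2 eta : rat, 0 < eta &
    forall c' d' : config S -> config S,
      isCA c' -> isCA d' -> isSurjective d' ->
      delta c c' < eta -> delta d d' < eta ->
      delta (fun x => c (d x)) (fun x => c' (d' x)) < eps.
Proof.
have /card_gt0P [x0 _] : (0 < #|S|)%N by lia.
set K := ((some_radius c).*2).+1.
exists (eps / K.+1%:R); first by rewrite divr_gt0 // ltr0Sn.
move=> c' d' hc' hd' hsurj' close_c close_d.
set M := (maxn (some_radius (fun x => c (d x))) (some_radius (fun x => c' (d' x)))
  + (some_radius c + maxn (some_radius d) (some_radius d'))
  + (maxn (some_radius c) (some_radius c') + some_radius d'))%N.
have -> := delta_density x0 (a := (- Posz M)%R) (n := (M.*2).+1)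
  (isCA_comp hc hd) (isCA_comp hc' hd'); try lia.
apply: le_lt_trans (density_le_add _ _ _ (differ_triangle _ (fun x => c (d' x)) _)) _.
rewrite density_differ_comp_surj //; last by lia.
have left_term := density_differ_comp_left x0 hc hd hd' (M := M) ltac:(lia).
rewrite -/K in left_term.
have K_eta : K%:R * delta d d' <= K%:R * (eps / K.+1%:R).
  by rewrite ler_wpM2l // ltW.
have split_eps : K%:R * (eps / K.+1%:R) + eps / K.+1%:R = eps.
  by rewrite -natr1; field; rewrite natr1 pnatr_eq0.
apply: le_lt_trans (lerD (le_trans left_term K_eta) (lexx _)) _.
by rewrite -[X in _ < X]split_eps ltrD2l.
Qed.
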